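(* Let $f,g\in C[0,1]$. Then $$\underline{\dim}_B G(f\cdot g)\le \max\{\underline{\dim}_B G(f),\ \overline{\dim}_B G(g)\}.$$
   Context: $C[0,1]$ is the space of real-valued continuous functions on $[0,1]$; $G(f)=\{(x,f(x)):x\in[0,1]\}\subset\mathbb{R}^2$ is the graph of $f$; $f\cdot g$ is the pointwise product. For a nonempty bounded set $F$, $N_\delta(F)$ is the smallest number of sets of diameter at most $\delta$ covering $F$, $\overline{\dim}_B F=\limsup_{\delta\to0}\frac{\log N_\delta(F)}{-\log\delta}$ and $\underline{\dim}_B F=\liminf_{\delta\to0}\frac{\log N_\delta(F)}{-\log\delta}$. *)

From HB Require Import structures.
From mathcomp Require Import all_boot all_order all_algebra.
From mathcomp Require Import all_classical all_reals all_analysis.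
Set Implicit Arguments. Unset Strict Implicit. Unset Printing Implicit Defensive.
Import Order.TTheory GRing.Theory Num.Theory.
Import numFieldTopology.Exports numFieldNormedType.Exports.
Local Open Scope classical_set_scope.
Local Open Scope ring_scope.

Section BoxDim.
Variable R : realType.

Definition dist2 (p q : R * R) : R :=
  Num.sqrt ((p.1 - q.1) ^+ 2 + (p.2 - q.2) ^+ 2).

Definition diam_le (U : set (R * R)) (d : R) : Prop :=
  forall p q, U p -> U q -> dist2 p q <= d.

Definition coverable (F : set (R * R)) (d : R) (n : nat) : Prop :=
  exists U : nat -> set (R * R),
    (forall i, (i < n)%N -> diam_le (U i) d) /\
    F `<=` \bigcup_(i in [set i | (i < n)%N]) U i.

(* N_d(F): the smallest such n (+oo if none) *)
Definition Ncov (F : set (R * R)) (d : R) : \bar R :=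
  ereal_inf [set (n%:R)%:E | n in coverable F d].

Definition box_ratio (F : set (R * R)) (d : R) : \bar R :=
  (ln (fine (Ncov F d)) / - ln d)%:E.

Definition upper_box_dim (F : set (R * R)) : \bar R :=
  limf_esup (box_ratio F) (at_right (0 : R)).
Definition lower_box_dim (F : set (R * R)) : \bar R :=
  limf_einf (box_ratio F) (at_right (0 : R)).

Definition graph (f : R -> R) : set (R * R) :=
  [set (x, f x) | x in `[0, 1]].

End BoxDim.

From HB Require Import structures.
From mathcomp Require Import all_boot all_order all_algebra.
From mathcomp Require Import all_classical all_reals all_analysis.
From mathcomp Require Import zify ring lra.
Set Implicit Arguments. Unset Strict Implicit. Unset Printing Implicit Defensive.
Import Order.TTheory GRing.Theory Num.Theory.
Import numFieldTopology.Exports numFieldNormedType.Exports.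
Local Open Scope classical_set_scope.
Local Open Scope ring_scope.

(* Cut [0, 1] into strips of width d/2.  By the intermediate value theorem,
   the oscillation of a continuous h on a strip is at most d times the number
   of sets of a d-cover of G(h) that meet the graph over the strip, and a set
   of diameter d meets at most 7 strips.  Hence, if |f|, |g| <= B, the
   oscillations of fg over all strips add up to O(B d (N_d(G f) + N_d(G g))),
   so N_d(G(fg)) <= C max(N_d(G f), N_d(G g)) with C depending on B only.
   Taking logarithms, the ratio for fg is at most the maximum of the ratios
   for f and g plus log C / |log d|; the liminf of such a maximum is bounded
   by the liminf of the first argument and the limsup of the second. *)

Section GraphCovers.
Variable R : realType.
Implicit Types (F G : set (R * R)) (d : R).

Lemma coverable_leq F d n m : (n <= m)%N -> coverable F d n -> coverable F d m.
Proof.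
move=> nm [U [hU cov]].
exists (fun i => if (i < n)%N then U i else set0); split.
  by move=> i im; case: ifP => [/hU//|_] p q.
move=> p /cov [i /= ilt Uip]; exists i => /=; first exact: leq_trans ilt nm.
by rewrite ilt.
Qed.

Lemma sub_coverable F G d n : F `<=` G -> coverable G d n -> coverable F d n.
Proof. by move=> FG [U [hU cov]]; exists U; split => // p /FG /cov. Qed.

Lemma coverableU F G d n m : coverable F d n -> coverable G d m ->
  coverable (F `|` G) d (n + m).
Proof.
move=> [U [hU cU]] [V [hV cV]].
exists (fun i => if (i < n)%N then U i else V (i - n)%N); split.
  move=> i im; case: ifP => [/hU//|/negbT]; rewrite -leqNgt => ni.
  apply: hV; lia.
move=> p [/cU [i /= ilt Uip]|/cV [i /= ilt Vip]].
  by exists i => /=; [lia | rewrite ilt].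
exists (n + i)%N => /=; first lia.
by rewrite ltnNge leq_addr /= addKn.
Qed.

Lemma coverable_bigcup (F_ : nat -> set (R * R)) d (m_ : nat -> nat) K :
  (forall k, (k < K)%N -> coverable (F_ k) d (m_ k)) ->
  coverable (\bigcup_(k in [set k | (k < K)%N]) F_ k) d (\sum_(0 <= k < K) m_ k).
Proof.
elim: K => [|K IH] h.
  by rewrite big_geq //; exists (fun _ => set0); split => // p [k /=].
rewrite big_nat_recr //=.
apply: (@sub_coverable _ ((\bigcup_(k in [set k | (k < K)%N]) F_ k) `|` F_ K)).
  move=> p [k /= kK Fkp]; have [kK'|Kk] := ltnP k K; first by left; exists k.
  by right; have -> : K = k by lia.
by apply: coverableU; [apply: IH => k kK; apply: h; lia | exact: h].
Qed.

Lemma Ncov_minP F d n : coverable F d n -> exists n0 : nat,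
  [/\ Ncov F d = n0%:R%:E, coverable F d n0 &
      forall m, coverable F d m -> (n0 <= m)%N].
Proof.
move=> cn.
have exP : exists n, `[< coverable F d n >] by exists n; exact/asboolP.
case: (ex_minnP exP) => n0 /asboolP c0 hmin.
exists n0; split => //; last by move=> m cm; apply: hmin; exact/asboolP.
apply/le_anti/andP; split; first by apply: ereal_inf_lbound; exists n0.
apply: le_ereal_inf_tmp => _ [m cm <-].
by rewrite lee_fin ler_nat; apply: hmin; exact/asboolP.
Qed.

Lemma norm_fst_le_dist2 (p q : R * R) : `|p.1 - q.1| <= dist2 p q.
Proof.
rewrite /dist2 -sqrtr_sqr ler_sqrt ?addr_ge0 ?sqr_ge0 //.
by rewrite lerDl sqr_ge0.
Qed.

Lemma norm_snd_le_dist2 (p q : R * R) : `|p.2 - q.2| <= dist2 p q.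
Proof.
rewrite /dist2 -sqrtr_sqr ler_sqrt ?addr_ge0 ?sqr_ge0 //.
by rewrite lerDr sqr_ge0.
Qed.

Lemma dist2_le d (p q : R * R) : 0 < d ->
  `|p.1 - q.1| <= d / 2 -> `|p.2 - q.2| <= d / 2 -> dist2 p q <= d.
Proof.
move=> d0; rewrite !ler_norml => /andP[a1 a2] /andP[b1 b2].
rewrite /dist2 -(ger0_norm (ltW d0)) -sqrtr_sqr ler_sqrt ?sqr_ge0 //.
move: a1 a2 b1 b2; set a := p.1 - q.1; set c := p.2 - q.2 => a1 a2 b1 b2.
have pa : 0 <= (d / 2 - a) * (d / 2 + a) by apply: mulr_ge0; lra.
have pb : 0 <= (d / 2 - c) * (d / 2 + c) by apply: mulr_ge0; lra.
have : d ^+ 2 - (a ^+ 2 + c ^+ 2) =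
  (d / 2 - a) * (d / 2 + a) + (d / 2 - c) * (d / 2 + c) + 2 * (d / 2) ^+ 2.
  by field.
have : 0 <= (d / 2) ^+ 2 by exact: sqr_ge0.
lra.
Qed.

Lemma itv_length_le_cover (A : nat -> set R) (s : seq nat) d (u v : R) :
  0 <= d -> (forall i, i \in s -> forall p q, A i p -> A i q -> `|p - q| <= d) ->
  (forall y, u <= y <= v -> exists2 i, i \in s & A i y) ->
  v - u <= (size s)%:R * d.
Proof.
move=> d0; move: (leqnn (size s)); move: {2}(size s) => n.
elim: n s u => [|n IH] s u sn hA hc;
  (have [vu|uv] := ltP v u; first by have := mulr_ge0 (ler0n R (size s)) d0; lra);
  have [i si Aiu] := hc u ltac:(by rewrite lexx uv).
  by move: sn si; rewrite leqn0 => /nilP ->.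
have s1 : (1 <= size s)%N by case: (s) si.
apply/ler_addgt0Pr => e e0.
(* The set covering [u] covers at most [u, u + d]; the others cover the rest. *)
have [vlt|vge] := ltP v (u + d + e).
  have : d <= (size s)%:R * d by rewrite ler_peMl // ler1n.
  lra.
set s' := [seq j <- s | j != i].
have ss' : (size s' < size s)%N.
  rewrite size_filter -(count_predC (pred1 i)) -add1n leq_add2r.
  by rewrite -has_count has_pred1.
have h1 : (size s')%:R + 1 <= (size s)%:R :> R by rewrite natr1 ler_nat.
suff : v - (u + d + e) <= (size s')%:R * d by nra.
apply: IH; first by rewrite -ltnS (leq_trans ss').
  by move=> j; rewrite mem_filter => /andP [_ js]; exact: hA.
move=> y /andP [y1 y2].
have [j js Ajy] := hc y ltac:(rewrite y2 andbT; lra).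
exists j => //; rewrite mem_filter js andbT.
apply/eqP => ji; move: Ajy; rewrite ji => Aiy.
have := hA i si y u Aiy Aiu; rewrite ger0_norm; lra.
Qed.

Definition strip d (k : nat) : set R :=
  [set x | x \in `[0, 1] /\ k%:R * (d / 2) <= x <= k.+1%:R * (d / 2)].

Definition graph_strip d (h : R -> R) (k : nat) : set (R * R) :=
  [set (x, h x) | x in strip d k].

Definition meets d (h : R -> R) (V : set (R * R)) (k : nat) : bool :=
  `[< exists z, strip d k z /\ V (z, h z) >].

Definition hits d (h : R -> R) (U : nat -> set (R * R)) (a k : nat) : nat :=
  \sum_(0 <= i < a) meets d h (U i) k.

Lemma graph_sub_strips d (h : R -> R) : 0 < d ->
  graph h `<=` \bigcup_(k in [set k | (k < (Num.truncn (2 / d)).+1)%N])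
                 graph_strip d h k.
Proof.
move=> d0 _ [x x01 <-].
have d20 : 0 < d / 2 by rewrite divr_gt0.
have /andP[x0 x1] : 0 <= x <= 1 by move: (x01 : x \in `[0, 1]); rewrite in_itv.
have /andP[t1 t2] := truncn_itv (divr_ge0 x0 (ltW d20)).
exists (Num.truncn (x / (d / 2))) => /=.
  rewrite ltnS truncn_le_nat; apply: le_lt_trans (truncnS_gt _).
  by rewrite ler_pdivrMr // mulrA divfK ?gt_eqF // divff // pnatr_eq0.
exists x => //; split => //.
by rewrite -ler_pdivlMr // t1 -ler_pdivrMr // ltW.
Qed.

Lemma graph_strip_coverable d (h : R -> R) k b m : 0 < d ->
  (forall x, strip d k x -> b <= h x <= b + m%:R * (d / 2)) ->
  coverable (graph_strip d h k) d m.+1.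
Proof.
move=> d0 hb; have d20 : 0 < d / 2 by rewrite divr_gt0.
exists (fun j : nat => [set p : R * R |
  k%:R * (d / 2) <= p.1 <= k.+1%:R * (d / 2) /\
  b + j%:R * (d / 2) <= p.2 <= b + j.+1%:R * (d / 2)]); split.
  move=> j _ p q [/andP[p1 p2] /andP[p3 p4]] [/andP[q1 q2] /andP[q3 q4]].
  apply: dist2_le => //; rewrite ler_norml; move: p2 q2 p4 q4;
  by rewrite -[k.+1]addn1 -[j.+1]addn1 !natrD => *; apply/andP; split; lra.
move=> _ [x sx <-]; have /andP[h1 h2] := hb x sx.
have r0 : 0 <= (h x - b) / (d / 2) by rewrite divr_ge0 ?subr_ge0 // ltW.
have /andP[t1 t2] := truncn_itv r0.
exists (Num.truncn ((h x - b) / (d / 2))) => /=.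
  by rewrite ltnS truncn_le_nat ltr_pdivrMr // -natr1; lra.
split; first by case: sx.
set t := Num.truncn _ in t1 t2 *.
have e1 : t%:R * (d / 2) <= h x - b by rewrite -ler_pdivlMr.
have e2 : h x - b < t.+1%:R * (d / 2) by rewrite -ltr_pdivrMr.
by apply/andP; split; lra.
Qed.

Lemma strip_oscillation_le d (h : R -> R) a (U : nat -> set (R * R)) k x y :
  0 < d -> {within `[0, 1], continuous h} ->
  (forall i, (i < a)%N -> diam_le (U i) d) ->
  graph h `<=` \bigcup_(i in [set i | (i < a)%N]) U i ->
  strip d k x -> strip d k y -> `|h x - h y| <= (hits d h U a k)%:R * d.
Proof.
move=> d0 hc hU cov.
wlog xy : x y / x <= y => [hwlog sx sy|].
  have [xy|yx] := leP x y; first exact: hwlog.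
  by rewrite distrC; apply: hwlog => //; exact: ltW.
move=> [+ /andP[x1 x2]] [+ /andP[y1 y2]].
rewrite !in_itv /= => /andP[x3 x4] /andP[y3 y4].
have sxy t : x <= t <= y -> strip d k t.
  move=> /andP[t1 t2]; split; first by rewrite in_itv /=; apply/andP; split; lra.
  by apply/andP; split; lra.
have hcxy : {within `[x, y], continuous h}.
  apply: continuous_subspaceW hc => t /=; rewrite in_itv /= => xty.
  by case: (sxy t xty).
set s := [seq i <- index_iota 0 a | meets d h (U i) k].
have -> : hits d h U a k = size s.
  rewrite /hits size_filter -sum1_count [RHS]big_mkcond.
  by apply: eq_bigr => i _; case: meets.
suff : Num.max (h x) (h y) - Num.min (h x) (h y) <= (size s)%:R * d.
  by case: (lerP (h x) (h y)).
apply: (@itv_length_le_cover (fun i => [set t | exists z, U i (z, t)])).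
- exact: ltW.
- move=> i; rewrite mem_filter mem_index_iota => /andP[_ ia] p q [z1 Up] [z2 Uq].
  exact: le_trans (norm_snd_le_dist2 (z1, p) (z2, q)) (hU i ia _ _ Up Uq).
- move=> t ht; have [c cxy <-] := IVT xy hcxy ht.
  have sc : strip d k c by apply: sxy; rewrite in_itv in cxy.
  have [i /= ia Uic] : (\bigcup_(i in [set i | (i < a)%N]) U i) (c, h c).
    by apply: cov; exists c => //; case: sc.
  exists i; last by exists c.
  by rewrite mem_filter mem_index_iota leq0n ia !andbT; apply/asboolP; exists c.
Qed.

Lemma meets_close d (h : R -> R) (V : set (R * R)) k1 k2 : 0 < d ->
  diam_le V d -> meets d h V k1 -> meets d h V k2 -> (k2 <= k1 + 3)%N.
Proof.
move=> d0 hV /asboolP[z1 [[_ /andP[a1 a2]] V1]] /asboolP[z2 [[_ /andP[b1 b2]] V2]].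
have := le_trans (norm_fst_le_dist2 (z1, h z1) (z2, h z2)) (hV _ _ V1 V2).
rewrite /= ler_norml => /andP[c1 c2].
have : k2%:R * (d / 2) <= (k1 + 3)%:R * (d / 2).
  by move: a2; rewrite -[k1.+1]addn1 !natrD => a2; lra.
by rewrite ler_pM2r ?divr_gt0 // ler_nat.
Qed.

Lemma sum_hits_le d (h : R -> R) a (U : nat -> set (R * R)) K : 0 < d ->
  (forall i, (i < a)%N -> diam_le (U i) d) ->
  (\sum_(0 <= k < K) hits d h U a k <= 7 * a)%N.
Proof.
move=> d0 hU; rewrite /hits exchange_big /=.
apply: (@leq_trans (\sum_(0 <= i < a) 7)); last first.
  by rewrite sum_nat_const_nat subn0 mulnC.
rewrite big_seq [leqRHS]big_seq; apply: leq_sum => i.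
rewrite mem_index_iota => /andP[_ ia].
have -> : (\sum_(0 <= k < K) meets d h (U i) k =
           count (meets d h (U i)) (index_iota 0 K))%N.
  by rewrite -sum1_count [RHS]big_mkcond; apply: eq_bigr => k _; case: meets.
have [[k1 mk1]|nomeet] := pselect (exists k1, meets d h (U i) k1); last first.
  rewrite (@eq_in_count _ _ pred0) ?count_pred0 // => k _ /=.
  by apply/negbTE/negP => mk; apply: nomeet; exists k.
rewrite -size_filter -[7%N](size_iota (k1 - 3)).
apply: uniq_leq_size; first by rewrite filter_uniq // iota_uniq.
move=> k; rewrite mem_filter mem_iota => /andP[mk _].
have := meets_close d0 (hU i ia) mk1 mk; have := meets_close d0 (hU i ia) mk mk1.
lia.
Qed.

Lemma coverable_graph_ge d (h : R -> R) a : 0 < d ->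
  coverable (graph h) d a -> 1 <= a%:R * d.
Proof.
move=> d0 [U [hU cov]].
have := @itv_length_le_cover (fun i => [set x | exists y, U i (x, y)])
  (index_iota 0 a) d 0 1 (ltW d0).
rewrite size_iota subn0 subr0; apply.
  move=> i; rewrite mem_index_iota => /andP[_ ia] p q [y1 U1] [y2 U2].
  exact: le_trans (norm_fst_le_dist2 (p, y1) (q, y2)) (hU i ia _ _ U1 U2).
move=> y y01.
have [i /= ia Ui] : (\bigcup_(i in [set i | (i < a)%N]) U i) (y, h y).
  by apply: cov; exists y => //; rewrite in_itv.
by exists i; [rewrite mem_index_iota ia | exists (h y)].
Qed.

Lemma coverable_graph_gt0 d (h : R -> R) a : 0 < d ->
  coverable (graph h) d a -> (0 < a)%N.
Proof.
by move=> d0 /(coverable_graph_ge d0); case: a => [|//]; rewrite mul0r ler10.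
Qed.

Lemma strips_count_le d a : 0 < d -> 1 <= a%:R * d ->
  ((Num.truncn (2 / d)).+1 <= 3 * a)%N.
Proof.
move=> d0 ad.
have a1 : (1 <= a)%N by case: (a) ad => [|//]; rewrite mul0r ler10.
rewrite -(ler_nat R) -natr1 natrM.
have t1 : (Num.truncn (2 / d))%:R <= 2 / d by rewrite truncn_le divr_ge0 // ltW.
have t2 : 2 / d <= 2 * a%:R by rewrite ler_pdivrMr //; lra.
have : (1 : R) <= a%:R by rewrite ler1n.
lra.
Qed.

Section Product.
Variables (d : R) (f g : R -> R) (B a b : nat).
Variables (U V : nat -> set (R * R)).
Hypotheses (d0 : 0 < d) (fc : {within `[0, 1], continuous f})
  (gc : {within `[0, 1], continuous g})
  (hB : forall x, x \in `[0, 1] -> `|f x| <= B%:R /\ `|g x| <= B%:R).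
Hypotheses (hU : forall i, (i < a)%N -> diam_le (U i) d)
  (covU : graph f `<=` \bigcup_(i in [set i | (i < a)%N]) U i)
  (hV : forall i, (i < b)%N -> diam_le (V i) d)
  (covV : graph g `<=` \bigcup_(i in [set i | (i < b)%N]) V i).

Lemma graph_strip_mul_coverable k :
  coverable (graph_strip d (f \* g) k) d
    (4 * B * (hits d f U a k + hits d g V b k)).+1.
Proof.
have [[x0 sx0]|nox] := pselect (exists x0, strip d k x0); last first.
  by apply: (@graph_strip_coverable _ _ _ 0) => // x sx; case: nox; exists x.
set L := B%:R * ((hits d g V b k)%:R * d) + B%:R * ((hits d f U a k)%:R * d).
apply: (@graph_strip_coverable _ _ _ ((f \* g) x0 - L)) => // x sx.
have -> : (4 * B * (hits d f U a k + hits d g V b k))%:R * (d / 2) = 2 * L.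
  by rewrite /L !natrM natrD; field.
have [hfx _] := hB (proj1 sx); have [_ hgx0] := hB (proj1 sx0).
have : `|(f \* g) x - (f \* g) x0| <= L.
  have -> : (f \* g) x - (f \* g) x0 = f x * (g x - g x0) + g x0 * (f x - f x0).
    by rewrite /=; ring.
  apply: le_trans (ler_normD _ _) _; rewrite !normrM.
  apply: lerD; apply: ler_pM => //; exact: strip_oscillation_le.
by rewrite ler_norml => /andP[h1 h2]; apply/andP; split; lra.
Qed.

(* [4 B] squares per hit, at most [7 (a + b)] hits and [3 a] strips. *)
Lemma coverable_graph_mul : coverable (graph (f \* g)) d ((28 * B + 3) * (a + b)).
Proof.
have K3a := strips_count_le d0 (coverable_graph_ge d0 (ex_intro _ U (conj hU covU))).
apply: sub_coverable (@graph_sub_strips d (f \* g) d0) _.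
apply: coverable_leq (coverable_bigcup (fun k _ => graph_strip_mul_coverable k)).
set K := (Num.truncn (2 / d)).+1 in K3a *.
have -> : (\sum_(0 <= k < K) (4 * B * (hits d f U a k + hits d g V b k)).+1 =
    4 * B * (\sum_(0 <= k < K) hits d f U a k) +
    4 * B * (\sum_(0 <= k < K) hits d g V b k) + K)%N.
  under eq_bigr do rewrite -addn1 mulnDr.
  by rewrite !big_split /= -!big_distrr /= sum_nat_const_nat subn0 muln1.
have := sum_hits_le f K d0 hU; have := sum_hits_le g K d0 hV.
nia.
Qed.

End Product.

End GraphCovers.

Section LimInf.
Variable R : realType.

Lemma lee_of_fin_gt (x T : \bar R) :
  (forall t : R, (T < t%:E)%E -> (x <= t%:E)%E) -> (x <= T)%E.
Proof.
case: T => [r| |] H.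
- apply/lee_addgt0Pr => e e0; apply: H; rewrite lte_fin; lra.
- exact: leey.
- case: x H => [s| |] H //.
  + by have := H (s - 1)%R (ltNyr _); rewrite lee_fin => h; exfalso; lra.
  + by have := H 0%R (ltNyr _).
Qed.

Lemma lte_fin_between (T : \bar R) (t : R) :
  (T < t%:E)%E -> exists s : R, (T < s%:E)%E /\ s < t.
Proof.
case: T => [r| |] //.
- by rewrite lte_fin => rt; exists ((r + t) / 2); rewrite lte_fin; split; lra.
- by move=> _; exists (t - 1); split; [exact: ltNyr | lra].
Qed.

Lemma near0_div_oppln_lt (c e : R) : 0 <= c -> 0 < e ->
  \forall d \near at_right (0 : R), 0 < d < 1 /\ c / - ln d < e.
Proof.
move=> c0 e0; set d1 := expR (- (c / e + 1)).
have ce0 : 0 <= c / e by rewrite divr_ge0 // ltW.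
have d1lt : d1 < 1 by rewrite /d1 expR_lt1; lra.
near=> d.
have /andP[dpos dd1] : 0 < d < d1.
  by apply/andP; split; near: d; [exact: nbhs_right_gt | apply: nbhs_right_lt; exact: expR_gt0].
split; first by rewrite dpos; lra.
have : ln d < ln d1 by rewrite ltr_ln // posrE ?expR_gt0.
rewrite /d1 expRK => lnd.
rewrite ltr_pdivrMr; last lra.
have : c / e < - ln d - 1 by lra.
rewrite ltr_pdivrMr //; nra.
Unshelve. all: by end_near.
Qed.

Lemma limf_einf_le_maxe (u v w : R -> R) (c : R) : 0 <= c ->
  (forall d, 0 < d < 1 -> w d <= c / (- ln d) + Num.max (u d) (v d)) ->
  (limf_einf (fun d => (w d)%:E) (at_right (0 : R)) <=
   maxe (limf_einf (fun d => (u d)%:E) (at_right (0 : R)))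
        (limf_esup (fun d => (v d)%:E) (at_right (0 : R))))%E.
Proof.
move=> c0 hw; rewrite limf_einfE; apply: ge_ereal_sup => _ [X FX <-].
apply: lee_of_fin_gt => t Tt; have [s [Ts st]] := lte_fin_between Tt.
have : (limf_esup (fun d => (v d)%:E) (at_right (0 : R)) < s%:E)%E.
  by apply: le_lt_trans Ts; rewrite le_max lexx orbT.
rewrite limf_esupE => /ereal_inf_lt [_ [W FW <-] supW].
have vW d : W d -> v d < s.
  move=> Wd; rewrite -lte_fin; apply: le_lt_trans supW.
  by apply: ereal_sup_ubound; exists d.
have ts0 : 0 < t - s by rewrite subr_gt0.
set Z := [set d | 0 < d < 1 /\ c / - ln d < t - s].
have FXWZ : (at_right (0 : R)) (X `&` W `&` Z).
  by apply: filterI; [exact: filterI | exact: near0_div_oppln_lt].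
have : (limf_einf (fun d => (u d)%:E) (at_right (0 : R)) < s%:E)%E.
  by apply: le_lt_trans Ts; rewrite le_max lexx.
rewrite limf_einfE => uinf.
have : (ereal_inf ((fun d => (u d)%:E) @` (X `&` W `&` Z)) < s%:E)%E.
  by apply: le_lt_trans uinf; apply: ereal_sup_ubound; exists (X `&` W `&` Z).
move=> /ereal_inf_lt [_ [d [[Xd Wd] [dlt ce]] <-]]; rewrite lte_fin => uds.
apply: (@le_trans _ _ (w d)%:E); first by apply: ereal_inf_lbound; exists d.
have : Num.max (u d) (v d) < s by rewrite gt_max uds vW.
have := hw d dlt; rewrite lee_fin; lra.
Qed.

End LimInf.

Section BoxRatio.
Variable R : realType.

Definition real_box_ratio (F : set (R * R)) (d : R) : R :=
  ln (fine (Ncov F d)) / - ln d.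

Lemma continuous_itv01_bounded (f : R -> R) : {within `[0, 1], continuous f} ->
  exists B : nat, forall x, x \in `[0, 1] -> `|f x| <= B%:R.
Proof.
move=> fc.
have [c1 _ h1] := EVT_max ler01 fc; have [c2 _ h2] := EVT_min ler01 fc.
exists (Num.truncn (`|f c1| + `|f c2|)).+1 => x x01.
apply: le_trans (ltW (truncnS_gt _)).
have := h1 x x01; have := h2 x x01.
have := ler_norm (f c1); have := ler_norm (- f c2); rewrite normrN.
have := normr_ge0 (f c1); have := normr_ge0 (f c2).
by rewrite ler_norml => *; apply/andP; split; lra.
Qed.

Lemma graph_coverable d (h : R -> R) (B : nat) : 0 < d ->
  (forall x, x \in `[0, 1] -> `|h x| <= B%:R) -> exists n, coverable (graph h) d n.
Proof.
move=> d0 hB; set m := (Num.truncn (4 * B%:R / d)).+1.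
have hm : 2 * B%:R <= m%:R * (d / 2).
  have -> : 2 * B%:R = 4 * B%:R / d * (d / 2) :> R by field; rewrite gt_eqF.
  by rewrite ler_pM2r ?divr_gt0 // ltW // truncnS_gt.
exists (\sum_(0 <= k < (Num.truncn (2 / d)).+1) m.+1)%N.
apply: sub_coverable (@graph_sub_strips _ d h d0) _.
apply: (coverable_bigcup (m_ := fun _ => m.+1)) => k _.
apply: (@graph_strip_coverable _ d h k (- B%:R) m d0) => x [x01 _].
by have := hB x x01; rewrite ler_norml => /andP[a1 a2]; apply/andP; split; lra.
Qed.

Lemma real_box_ratio_graph_mul_le (f g : R -> R) (B : nat) d :
  {within `[0, 1], continuous f} -> {within `[0, 1], continuous g} ->
  (forall x, x \in `[0, 1] -> `|f x| <= B%:R /\ `|g x| <= B%:R) -> 0 < d < 1 ->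
  real_box_ratio (graph (f \* g)) d <=
    ln (2 * (28 * B + 3)%:R) / - ln d +
    Num.max (real_box_ratio (graph f) d) (real_box_ratio (graph g) d).
Proof.
move=> fc gc hB /andP[d0 d1]; set C := (28 * B + 3)%N.
have [_ /Ncov_minP [nf [Ef cf _]]] := graph_coverable d0 (fun x hx => (hB x hx).1).
have [_ /Ncov_minP [ng [Eg cg _]]] := graph_coverable d0 (fun x hx => (hB x hx).2).
have [U [hU covU]] := cf; have [V [hV covV]] := cg.
have cover_fg := coverable_graph_mul d0 fc gc hB hU covU hV covV.
have /Ncov_minP [nfg [Efg cfg minfg]] := cover_fg.
have nfg_le : (nfg <= 2 * C * maxn nf ng)%N by apply: leq_trans (minfg _ cover_fg) _; nia.
have C_gt0 : (0 < C)%N by rewrite /C addn3.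
have max_gt0 : (0 < maxn nf ng)%N by rewrite leq_max (coverable_graph_gt0 d0 cf).
have ln_nfg : ln (nfg%:R : R) <= ln (2 * C%:R) + ln (maxn nf ng)%:R.
  rewrite -lnM ?posrE ?mulr_gt0 ?ltr0n //.
  rewrite ler_ln ?posrE ?mulr_gt0 ?ltr0n ?(coverable_graph_gt0 d0 cfg) //.
  by rewrite -!natrM ler_nat.
rewrite /real_box_ratio Ef Eg Efg /=.
have inv_ge0 : 0 <= (- ln d)^-1 by rewrite invr_ge0 oppr_ge0 ltW // ln_lt0 // d0.
apply: le_trans (ler_wpM2r inv_ge0 ln_nfg) _.
rewrite mulrDl lerD2l.
by case: (leqP nf ng) => h; rewrite ?(maxn_idPr h) ?(maxn_idPl (ltnW h)) le_max lexx ?orbT.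
Qed.

End BoxRatio.

Theorem proposition3p6 (R : realType) (f g : R -> R)
  (hf : {within `[0, 1], continuous f})
  (hg : {within `[0, 1], continuous g}) :
  (lower_box_dim (graph (f \* g)%R)
   <= maxe (lower_box_dim (graph f)) (upper_box_dim (graph g)))%E.
Proof.
have [Bf hBf] := continuous_itv01_bounded hf.
have [Bg hBg] := continuous_itv01_bounded hg.
set B := maxn Bf Bg.
have hB x : x \in `[0, 1] -> `|f x| <= B%:R /\ `|g x| <= B%:R.
  move=> x01; have := hBf x x01; have := hBg x x01.
  have : Bf%:R <= B%:R :> R /\ Bg%:R <= B%:R :> R by rewrite !ler_nat leq_maxl leq_maxr.
  by move=> [] *; split; lra.
apply: (@limf_einf_le_maxe R (real_box_ratio (graph f)) (real_box_ratio (graph g))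
  (real_box_ratio (graph (f \* g))) (ln (2 * (28 * B + 3)%:R))).
  by rewrite ln_ge0 // -natrM ler1n muln_gt0 addn3.
by move=> d hd; exact: real_box_ratio_graph_mul_le.
Qed.
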